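(* For $\tau>-1$, the function $r\mapsto\frac{h_u'(r)}{r}$ is increasing on $(0,j_\tau)$, where $h_u(r):=r\frac{J_{\tau+1}(r)}{J_\tau(r)}$.
   Context: $J_\tau$ denotes the Bessel function of the first kind of order $\tau$ and $j_\tau$ its first positive zero. *)

From Stdlib Require Import Reals Lra ClassicalEpsilon Arith Factorial.
Open Scope R_scope.

(* The limit of a real sequence (a chosen limit if it converges; arbitrary otherwise). *)
Definition Rlim (u : nat -> R) : R :=
  epsilon (inhabits 0) (fun l => Un_cv u l).

(* Euler's Gamma function via the Gauss product formula (valid for x > 0):
   Gamma x = lim_n n! n^x / (x (x+1) ... (x+n)). *)
Definition Gamma (x : R) : R :=
  Rlim (fun n => INR (fact n) * Rpower (INR n) x / prod_f_R0 (fun k => x + INR k) n).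

Definition BesselJ (tau r : R) : R :=
  Rlim (fun N => sum_f_R0 (fun m =>
          (-1) ^ m / (INR (fact m) * Gamma (INR m + tau + 1))
          * Rpower (r / 2) (2 * INR m + tau)) N).

Definition h_u (tau r : R) : R := r * BesselJ (tau + 1) r / BesselJ tau r.

(* 1. The Gauss product defining Gamma converges to a positive limit on (0, oo)
      and satisfies Gamma(x+1) = x Gamma(x).
   2. Hence J_tau(r) = (r/2)^tau phi(r^2) for the entire power series
      phi(t) = sum_m (-1)^m t^m / (4^m m! Gamma(m+tau+1)), which solves
      t phi'' + (tau+1) phi' + phi/4 = 0, and J_{tau+1}(r) = -4 (r/2)^{tau+1} phi'(r^2).
      So h_u(r) = 2 z(r^2) with z(t) = -t phi'(t) / phi(t), and phi > 0 on [0, j^2).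
   3. z solves the Riccati equation t z' = t/4 - tau z + z^2, whose formal power
      series solution sum c_n t^n has c_n >= 0 and c_2 > 0.
   4. Comparison principle: for a series p with p(0) = 0 the function
      t^tau exp(-int p/t) (p phi + t phi') has derivative of the sign of the Riccati
      defect of p and vanishes at 0+.  Applied to the truncations of sum c_n t^n this
      bounds the partial sums by z, so the series converges on [0, j^2); applied to
      the full series it gives z(t) = sum c_n t^n there.
   5. Then h_u'(r)/r = 4 S'(r^2) with S = sum c_n t^n, and S' is strictly increasing
      because all coefficients of S'' are nonnegative and the constant one is 2 c_2 > 0.
   The file follows these steps in order.  Only the absence of zeros of J_tau in
   (0, j) is used. *)

From Stdlib Require Import Reals Lra Lia Arith Factorial ClassicalEpsilon.
From Coquelicot Require Import Coquelicot.
Open Scope R_scope.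

Lemma Rlim_correct (u : nat -> R) (l : R) : Un_cv u l -> Rlim u = l.
Proof.
  intro Hl. apply UL_sequence with u; auto.
  unfold Rlim. apply (epsilon_spec (inhabits 0) (fun l => Un_cv u l)). now exists l.
Qed.

Lemma Un_cv_harmonic_bound (u : nat -> R) (l C : R) :
  (forall n, Rabs (u n - l) <= C / INR (S n)) -> Un_cv u l.
Proof.
  intros Hu eps He. destruct (INR_archimed eps C He) as [N HN].
  exists N. intros n Hn. unfold R_dist.
  assert (HNn : INR N < INR (S n)) by (apply lt_INR; lia).
  assert (HSn : 0 < INR (S n)) by (apply lt_0_INR; lia).
  apply Rle_lt_trans with (1 := Hu n).
  apply Rmult_lt_reg_r with (INR (S n)); auto.
  unfold Rdiv. rewrite Rmult_assoc, Rinv_l, Rmult_1_r by lra.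
  assert (0 <= INR N) by apply pos_INR. nra.
Qed.

Lemma Un_cv_tail (u : nat -> R) (l : R) : Un_cv (fun m => u (S m)) l -> Un_cv u l.
Proof.
  intros H eps He. destruct (H eps He) as [N HN]. exists (S N). intros n Hn.
  destruct n; [lia | apply HN; lia].
Qed.

Lemma exp_le_compat (a b : R) : a <= b -> exp a <= exp b.
Proof. intro H. destruct (Req_dec a b); [subst; lra | apply Rlt_le, exp_increasing; lra]. Qed.

Lemma ln_le_minus_one (u : R) : 0 < u -> ln u <= u - 1.
Proof.
  intro Hu. rewrite <- (ln_exp (u - 1)). apply ln_le; auto.
  pose proof (exp_ineq1_le (u - 1)). lra.
Qed.

Lemma ln_succ_bounds (n : nat) :
  (0 < n)%nat -> / INR (S n) <= ln (INR (S n)) - ln (INR n) <= / INR n.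
Proof.
  intro Hn. assert (Hn' : 0 < INR n) by (apply lt_0_INR; auto).
  rewrite S_INR. split.
  - assert (Hq : 0 < INR n / (INR n + 1)) by (apply Rdiv_lt_0_compat; lra).
    pose proof (ln_le_minus_one _ Hq) as H.
    replace (INR n) with ((INR n / (INR n + 1)) * (INR n + 1)) at 3 by (field; lra).
    rewrite ln_mult by lra.
    replace (INR n / (INR n + 1) - 1) with (- / (INR n + 1)) in H by (field; lra). lra.
  - assert (Hq : 0 < (INR n + 1) / INR n) by (apply Rdiv_lt_0_compat; lra).
    pose proof (ln_le_minus_one _ Hq) as H.
    replace (INR n + 1) with (INR n * ((INR n + 1) / INR n)) at 1 by (field; lra).
    rewrite ln_mult by lra.
    replace ((INR n + 1) / INR n - 1) with (/ INR n) in H by (field; lra). lra.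
Qed.

Definition gauss_seq (x : R) (n : nat) : R :=
  INR (fact n) * Rpower (INR n) x / prod_f_R0 (fun k => x + INR k) n.

(* Ratio of consecutive terms of Gauss's sequence, from n >= 1 on. *)
Definition gauss_ratio (x : R) (n : nat) : R :=
  INR (S n) * exp (x * (ln (INR (S n)) - ln (INR n))) / (x + INR (S n)).

Section Gauss.
Variable x : R.
Hypothesis Hx : 0 < x.

Lemma gauss_prod_pos (n : nat) : 0 < prod_f_R0 (fun k => x + INR k) n.
Proof.
  induction n; simpl; [lra|].
  apply Rmult_lt_0_compat; auto. pose proof (pos_INR (S n)). simpl in *. lra.
Qed.

Lemma gauss_seq_pos (n : nat) : 0 < gauss_seq x n.
Proof.
  unfold gauss_seq, Rdiv. apply Rmult_lt_0_compat.
  - apply Rmult_lt_0_compat; [apply lt_0_INR, lt_O_fact | apply exp_pos].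
  - apply Rinv_0_lt_compat, gauss_prod_pos.
Qed.

Lemma gauss_seq_succ (n : nat) :
  (0 < n)%nat -> gauss_seq x (S n) = gauss_seq x n * gauss_ratio x n.
Proof.
  intro Hn. unfold gauss_seq, gauss_ratio, Rpower.
  pose proof (gauss_prod_pos n).
  assert (0 < x + INR (S n)) by (pose proof (pos_INR (S n)); lra).
  change (prod_f_R0 (fun k => x + INR k) (S n)) with
    (prod_f_R0 (fun k => x + INR k) n * (x + INR (S n))).
  change (fact (S n)) with (S n * fact n)%nat. rewrite mult_INR.
  replace (x * ln (INR (S n))) with
    (x * ln (INR n) + x * (ln (INR (S n)) - ln (INR n))) by ring.
  rewrite exp_plus. field. lra.
Qed.

(* Each ratio is >= 1, since 1 + x/(n+1) <= exp(x/(n+1)) <= ((n+1)/n)^x. *)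
Lemma gauss_ratio_ge_1 (n : nat) : (0 < n)%nat -> 1 <= gauss_ratio x n.
Proof.
  intro Hn. unfold gauss_ratio. destruct (ln_succ_bounds n Hn) as [H1 _].
  pose proof (exp_ineq1_le (x * (ln (INR (S n)) - ln (INR n)))).
  assert (Hs : 0 < INR (S n)) by (apply lt_0_INR; lia).
  assert (x * / INR (S n) <= x * (ln (INR (S n)) - ln (INR n)))
    by (apply Rmult_le_compat_l; lra).
  apply Rmult_le_reg_r with (x + INR (S n)); [lra|].
  unfold Rdiv. rewrite Rmult_assoc, Rinv_l, Rmult_1_r by lra.
  replace (1 * (x + INR (S n))) with (INR (S n) * (1 + x * / INR (S n))) by (field; lra).
  apply Rmult_le_compat_l; lra.
Qed.

(* The ratios are bounded by a telescoping product. *)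
Lemma gauss_ratio_le (n : nat) :
  (0 < n)%nat -> gauss_ratio x n <= exp (x * (x + 1) * (/ INR n - / INR (S n))).
Proof.
  intro Hn. unfold gauss_ratio. destruct (ln_succ_bounds n Hn) as [_ H2].
  assert (Hn' : 0 < INR n) by (apply lt_0_INR; auto).
  rewrite S_INR in *.
  assert (A : exp (x * (ln (INR n + 1) - ln (INR n))) <= exp (x * / INR n))
    by (apply exp_le_compat, Rmult_le_compat_l; lra).
  assert (B : (INR n + 1) / (x + (INR n + 1)) <= exp (- (x / (x + (INR n + 1))))).
  { pose proof (exp_ineq1_le (- (x / (x + (INR n + 1))))).
    replace ((INR n + 1) / (x + (INR n + 1))) with (1 + - (x / (x + (INR n + 1))))
      by (field; lra). lra. }
  apply Rle_trans with (exp (x * / INR n) * exp (- (x / (x + (INR n + 1))))).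
  { replace ((INR n + 1) * exp (x * (ln (INR n + 1) - ln (INR n))) / (x + (INR n + 1)))
      with (exp (x * (ln (INR n + 1) - ln (INR n))) * ((INR n + 1) / (x + (INR n + 1))))
      by (field; lra).
    apply Rmult_le_compat; try lra; [apply Rlt_le, exp_pos | apply Rlt_le, Rdiv_lt_0_compat; lra]. }
  rewrite <- exp_plus. apply exp_le_compat.
  replace (x * / INR n + - (x / (x + (INR n + 1))))
    with (x * (x + 1) / (INR n * (x + (INR n + 1)))) by (field; lra).
  replace (x * (x + 1) * (/ INR n - / (INR n + 1)))
    with (x * (x + 1) / (INR n * (INR n + 1))) by (field; lra).
  unfold Rdiv. apply Rmult_le_compat_l; [nra|]. apply Rinv_le_contravar; nra.
Qed.

Lemma gauss_seq_bound (m : nat) :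
  gauss_seq x (S m) <= gauss_seq x 1 * exp (x * (x + 1) * (1 - / INR (S m))).
Proof.
  induction m.
  - simpl (INR 1). replace (1 - / 1) with 0 by field. rewrite Rmult_0_r, exp_0. lra.
  - rewrite gauss_seq_succ by lia.
    pose proof (gauss_ratio_le (S m) ltac:(lia)).
    pose proof (gauss_ratio_ge_1 (S m) ltac:(lia)).
    pose proof (gauss_seq_pos (S m)).
    apply Rle_trans with (gauss_seq x 1 * exp (x * (x + 1) * (1 - / INR (S m)))
                          * exp (x * (x + 1) * (/ INR (S m) - / INR (S (S m))))).
    + apply Rmult_le_compat; lra.
    + rewrite Rmult_assoc, <- exp_plus. right. f_equal. f_equal. ring.
Qed.

(* Gauss's sequence is increasing and bounded, so it converges to Gamma x > 0. *)
Lemma Gamma_spec : Un_cv (gauss_seq x) (Gamma x) /\ 0 < Gamma x.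
Proof.
  assert (Hg : Un_growing (fun m => gauss_seq x (S m))).
  { intro m. simpl. rewrite (gauss_seq_succ (S m)) by lia.
    pose proof (gauss_ratio_ge_1 (S m) ltac:(lia)). pose proof (gauss_seq_pos (S m)). nra. }
  assert (Hb : has_ub (fun m => gauss_seq x (S m))).
  { exists (gauss_seq x 1 * exp (x * (x + 1))). intros y [m ->].
    apply Rle_trans with (1 := gauss_seq_bound m).
    apply Rmult_le_compat_l; [apply Rlt_le, gauss_seq_pos|]. apply exp_le_compat.
    assert (0 < / INR (S m)) by (apply Rinv_0_lt_compat, lt_0_INR; lia).
    assert (0 < x * (x + 1)) by nra. nra. }
  destruct (growing_cv _ Hg Hb) as [l Hl].
  assert (HG : Gamma x = l) by (apply Rlim_correct, Un_cv_tail, Hl).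
  rewrite HG. split; [apply Un_cv_tail, Hl|].
  pose proof (growing_ineq _ _ Hg Hl 0). pose proof (gauss_seq_pos 1). simpl in *. lra.
Qed.

Lemma gauss_prod_shift (n : nat) :
  prod_f_R0 (fun k => x + 1 + INR k) n * x = prod_f_R0 (fun k => x + INR k) (S n).
Proof.
  induction n; [simpl; ring|].
  change (prod_f_R0 (fun k => x + 1 + INR k) (S n)) with
    (prod_f_R0 (fun k => x + 1 + INR k) n * (x + 1 + INR (S n))).
  change (prod_f_R0 (fun k => x + INR k) (S (S n))) with
    (prod_f_R0 (fun k => x + INR k) (S n) * (x + INR (S (S n)))).
  rewrite <- IHn, (S_INR (S n)). ring.
Qed.

Lemma gauss_seq_shift (n : nat) :
  (0 < n)%nat -> gauss_seq (x + 1) n = gauss_seq x n * (x * INR n / (x + 1 + INR n)).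
Proof.
  intro Hn. unfold gauss_seq. assert (0 < INR n) by (apply lt_0_INR; auto).
  rewrite Rpower_plus, Rpower_1 by auto.
  pose proof (gauss_prod_shift n) as E.
  change (prod_f_R0 (fun k => x + INR k) (S n)) with
    (prod_f_R0 (fun k => x + INR k) n * (x + INR (S n))) in E.
  rewrite S_INR in E.
  pose proof (gauss_prod_pos n).
  replace (prod_f_R0 (fun k : nat => x + 1 + INR k) n) with
    (prod_f_R0 (fun k : nat => x + INR k) n * (x + (INR n + 1)) / x)
    by (rewrite <- E; field; lra).
  field. split; lra.
Qed.

Lemma Gamma_succ : Gamma (x + 1) = x * Gamma x.
Proof.
  destruct Gamma_spec as [HG _].
  assert (Hfrac : Un_cv (fun n => x * INR n / (x + 1 + INR n)) x).
  { apply Un_cv_harmonic_bound with (x * (x + 1)). intro n.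
    pose proof (pos_INR n). rewrite S_INR.
    replace (x * INR n / (x + 1 + INR n) - x) with (- (x * (x + 1) / (x + 1 + INR n)))
      by (field; lra).
    rewrite Rabs_Ropp, Rabs_pos_eq by (apply Rlt_le, Rdiv_lt_0_compat; nra).
    unfold Rdiv. apply Rmult_le_compat_l; [nra|]. apply Rinv_le_contravar; lra. }
  rewrite Rmult_comm. apply (Rlim_correct (gauss_seq (x + 1))), Un_cv_tail.
  intros eps He. destruct (CV_mult _ _ _ _ HG Hfrac eps He) as [N HN].
  exists N. intros n Hn. rewrite gauss_seq_shift by lia. exact (HN (S n) ltac:(lia)).
Qed.

End Gauss.

(* Coefficients of J_b(r) / (r/2)^b as a power series in r^2. *)
Definition bessel_coef (b : R) (m : nat) : R :=
  (-1) ^ m / (INR (fact m) * Gamma (INR m + b + 1)) * (/ 4) ^ m.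

Section BesselCoefficients.
Variable b : R.
Hypothesis Hb : -1 < b.

Lemma Gamma_index_pos (m : nat) : 0 < Gamma (INR m + b + 1).
Proof. apply Gamma_spec. pose proof (pos_INR m). lra. Qed.

Lemma bessel_coef_succ (m : nat) :
  bessel_coef b (S m) = - bessel_coef b m / (4 * INR (S m) * (INR m + b + 1)).
Proof.
  unfold bessel_coef.
  replace (INR (S m) + b + 1) with ((INR m + b + 1) + 1) by (rewrite S_INR; ring).
  rewrite Gamma_succ by (pose proof (pos_INR m); lra).
  pose proof (Gamma_index_pos m). pose proof (pos_INR m).
  change (fact (S m)) with (S m * fact m)%nat. rewrite mult_INR.
  assert (0 < INR (fact m)) by (apply lt_0_INR, lt_O_fact).
  assert (0 < INR (S m)) by (apply lt_0_INR; lia).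
  simpl pow. field. repeat split; lra.
Qed.

Lemma bessel_coef_neq_0 (m : nat) : bessel_coef b m <> 0.
Proof.
  unfold bessel_coef. pose proof (Gamma_index_pos m).
  assert (0 < INR (fact m)) by (apply lt_0_INR, lt_O_fact).
  assert (Hden : INR (fact m) * Gamma (INR m + b + 1) <> 0) by nra.
  apply Rmult_integral_contrapositive; split; [|apply pow_nonzero; lra].
  apply Rmult_integral_contrapositive; split; [apply pow_nonzero; lra|].
  now apply Rinv_neq_0_compat.
Qed.

Lemma bessel_coef_radius : CV_radius (bessel_coef b) = p_infty.
Proof.
  apply CV_radius_infinite_DAlembert; [exact bessel_coef_neq_0|].
  apply is_lim_seq_Reals, Un_cv_harmonic_bound with (/ (4 * (b + 1))). intro n.
  rewrite bessel_coef_succ. pose proof (bessel_coef_neq_0 n). pose proof (pos_INR n).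
  assert (0 < INR (S n)) by (apply lt_0_INR; lia).
  replace (- bessel_coef b n / (4 * INR (S n) * (INR n + b + 1)) / bessel_coef b n)
    with (- / (4 * INR (S n) * (INR n + b + 1))) by (field; repeat split; lra).
  rewrite Rminus_0_r, Rabs_Rabsolu, Rabs_Ropp, Rabs_pos_eq
    by (apply Rlt_le, Rinv_0_lt_compat; nra).
  unfold Rdiv. rewrite <- Rinv_mult. apply Rinv_le_contravar; [nra|].
  rewrite S_INR. nra.
Qed.

Lemma bessel_coef_inside (t : R) : Rbar_lt (Rabs t) (CV_radius (bessel_coef b)).
Proof. rewrite bessel_coef_radius. exact I. Qed.

Lemma BesselJ_series (r : R) :
  0 < r -> BesselJ b r = Rpower (r / 2) b * PSeries (bessel_coef b) (r ^ 2).
Proof.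
  intro Hr. unfold BesselJ. apply Rlim_correct.
  assert (Hs := PSeries_correct _ _ (CV_radius_inside _ _ (bessel_coef_inside (r ^ 2)))).
  apply is_pseries_R, is_series_Reals in Hs.
  assert (Hpow : 0 < Rpower (r / 2) b) by apply exp_pos.
  intros eps He. destruct (Hs (eps / Rpower (r / 2) b) ltac:(apply Rdiv_lt_0_compat; auto))
    as [N HN].
  exists N. intros n Hn. specialize (HN n Hn).
  assert (E : sum_f_R0 (fun m => (-1) ^ m / (INR (fact m) * Gamma (INR m + b + 1))
                                 * Rpower (r / 2) (2 * INR m + b)) n
              = Rpower (r / 2) b * sum_f_R0 (fun m => bessel_coef b m * (r ^ 2) ^ m) n).
  { rewrite scal_sum. apply sum_eq. intros i _. unfold bessel_coef.
    rewrite Rpower_plus. replace (2 * INR i) with (INR (2 * i)) by (rewrite mult_INR; simpl; ring).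
    rewrite Rpower_pow, pow_mult by lra.
    replace ((r / 2) ^ 2) with (/ 4 * r ^ 2) by field. rewrite Rpow_mult_distr. ring. }
  rewrite E. unfold R_dist in *. rewrite <- Rmult_minus_distr_l, Rabs_mult.
  rewrite (Rabs_pos_eq (Rpower _ _)) by lra.
  apply Rmult_lt_reg_r with (/ Rpower (r / 2) b); [apply Rinv_0_lt_compat; lra|].
  replace (eps * / Rpower (r / 2) b) with (eps / Rpower (r / 2) b) by reflexivity.
  rewrite Rmult_comm, <- Rmult_assoc, Rinv_l, Rmult_1_l by lra. exact HN.
Qed.

End BesselCoefficients.

(* Lowering the order by one: the coefficients of order b+1 are, up to the factor -4,
   those of the derivative of the order-b series. *)
Lemma bessel_coef_shift (b : R) (m : nat) :
  -1 < b -> bessel_coef (b + 1) m = -4 * INR (S m) * bessel_coef b (S m).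
Proof.
  intro Hb. rewrite bessel_coef_succ by auto. unfold bessel_coef.
  replace (INR m + (b + 1) + 1) with ((INR m + b + 1) + 1) by ring.
  rewrite Gamma_succ by (pose proof (pos_INR m); lra).
  pose proof (Gamma_index_pos b Hb m). pose proof (pos_INR m).
  assert (0 < INR (fact m)) by (apply lt_0_INR, lt_O_fact).
  assert (0 < INR (S m)) by (apply lt_0_INR; lia).
  field. repeat split; lra.
Qed.

Section BesselSeries.
Variable tau : R.
Hypothesis Htau : -1 < tau.

(* J_tau(r) = (r/2)^tau phi(r^2); phi1 and phi2 are the first two derivatives of phi. *)
Definition phi (t : R) : R := PSeries (bessel_coef tau) t.
Definition phi1 (t : R) : R := PSeries (PS_derive (bessel_coef tau)) t.
Definition phi2 (t : R) : R := PSeries (PS_derive (PS_derive (bessel_coef tau))) t.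

Lemma phi1_inside (t : R) : Rbar_lt (Rabs t) (CV_radius (PS_derive (bessel_coef tau))).
Proof. rewrite CV_radius_derive. now apply bessel_coef_inside. Qed.

Lemma phi2_inside (t : R) :
  Rbar_lt (Rabs t) (CV_radius (PS_derive (PS_derive (bessel_coef tau)))).
Proof. rewrite !CV_radius_derive. now apply bessel_coef_inside. Qed.

Lemma phi_derive (t : R) : is_derive phi t (phi1 t).
Proof. now apply is_derive_PSeries, bessel_coef_inside. Qed.

Lemma phi1_derive (t : R) : is_derive phi1 t (phi2 t).
Proof. apply is_derive_PSeries, phi1_inside. Qed.

Lemma phi_continuous (t : R) : continuity_pt phi t.
Proof. now apply PSeries_continuity, bessel_coef_inside. Qed.

(* Bessel's equation in the variable t = r^2, checked coefficientwise. *)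
Lemma phi_ode (t : R) : t * phi2 t + (tau + 1) * phi1 t + phi t / 4 = 0.
Proof.
  unfold phi2, phi1, phi.
  rewrite <- PSeries_incr_1, <- PSeries_scal.
  replace (PSeries (bessel_coef tau) t / 4) with (PSeries (PS_scal (/ 4) (bessel_coef tau)) t)
    by (rewrite PSeries_scal; unfold Rdiv; ring).
  assert (E1 : ex_pseries (PS_incr_1 (PS_derive (PS_derive (bessel_coef tau)))) t)
    by apply ex_pseries_incr_1, CV_radius_inside, phi2_inside.
  assert (E2 : ex_pseries (PS_scal (tau + 1) (PS_derive (bessel_coef tau))) t)
    by (apply ex_pseries_scal; [apply Rmult_comm | apply CV_radius_inside, phi1_inside]).
  assert (E3 : ex_pseries (PS_scal (/ 4) (bessel_coef tau)) t)
    by (apply ex_pseries_scal; [apply Rmult_comm | apply CV_radius_inside, bessel_coef_inside; auto]).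
  rewrite <- PSeries_plus by auto.
  rewrite <- PSeries_plus by (auto; apply ex_pseries_plus; auto).
  rewrite <- (PSeries_const_0 t). apply PSeries_ext. intro n.
  unfold PS_plus, PS_scal, PS_incr_1, PS_derive. simpl.
  unfold plus, scal, mult, zero; simpl. unfold mult; simpl.
  destruct n.
  - rewrite bessel_coef_succ by auto. simpl. field. lra.
  - rewrite (bessel_coef_succ tau Htau (S n)), (bessel_coef_succ tau Htau n).
    pose proof (bessel_coef_neq_0 tau Htau n). pose proof (pos_INR n).
    rewrite !S_INR.
    replace (match n with 0%nat => 1 | S _ => INR n + 1 end) with (INR n + 1)
      by (destruct n; simpl; ring).
    field. repeat split; lra.
Qed.

Lemma phi_0_pos : 0 < phi 0.
Proof.
  unfold phi. rewrite PSeries_0. unfold bessel_coef. simpl.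
  pose proof (Gamma_index_pos tau Htau 0) as H. simpl in H.
  apply Rmult_lt_0_compat; [apply Rdiv_lt_0_compat; lra | lra].
Qed.

Lemma BesselJ_phi (r : R) : 0 < r -> BesselJ tau r = Rpower (r / 2) tau * phi (r ^ 2).
Proof. now apply BesselJ_series. Qed.

Lemma BesselJ_succ_phi (r : R) :
  0 < r -> BesselJ (tau + 1) r = Rpower (r / 2) (tau + 1) * (-4 * phi1 (r ^ 2)).
Proof.
  intro Hr. rewrite BesselJ_series by (auto; lra). f_equal.
  unfold phi1. rewrite <- PSeries_scal. apply PSeries_ext. intro n.
  unfold PS_scal, PS_derive. rewrite bessel_coef_shift by auto.
  change (scal (-4) (INR (S n) * bessel_coef tau (S n)))
    with (-4 * (INR (S n) * bessel_coef tau (S n))). ring.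
Qed.

Lemma h_u_phi (r : R) :
  0 < r -> phi (r ^ 2) <> 0 -> h_u tau r = -2 * r ^ 2 * phi1 (r ^ 2) / phi (r ^ 2).
Proof.
  intros Hr Hphi. unfold h_u. rewrite BesselJ_phi, BesselJ_succ_phi by auto.
  rewrite Rpower_plus, Rpower_1 by lra.
  assert (0 < Rpower (r / 2) tau) by apply exp_pos.
  field. split; lra.
Qed.

End BesselSeries.

(* Since J_tau has no zero in (0, j) and phi(0) > 0, phi stays positive on [0, j^2). *)
Lemma phi_pos (tau j : R) : -1 < tau -> 0 < j ->
  (forall r, 0 < r < j -> BesselJ tau r <> 0) ->
  forall t, 0 <= t < j ^ 2 -> 0 < phi tau t.
Proof.
  intros Htau Hj Hfirst.
  assert (Hnz : forall t, 0 < t < j ^ 2 -> phi tau t <> 0).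
  { intros t Ht Hphi. assert (0 < sqrt t) by (apply sqrt_lt_R0; lra).
    assert (sqrt t < j) by (rewrite <- (sqrt_pow2 j) by lra; apply sqrt_lt_1_alt; lra).
    apply (Hfirst (sqrt t)); [lra|].
    rewrite BesselJ_phi, pow2_sqrt, Hphi by (auto; lra). ring. }
  pose proof (phi_0_pos tau Htau).
  intros t Ht. destruct (Req_dec t 0) as [->|Ht0]; auto.
  destruct (Rlt_le_dec 0 (phi tau t)) as [|Hneg]; auto. exfalso.
  destruct (IVT_cor (phi tau) 0 t (phi_continuous tau Htau)) as [z [Hz Hphiz]]; [lra|nra|].
  destruct (Req_dec z 0) as [->|]; [lra|].
  apply (Hnz z); [lra|auto].
Qed.

(* Indicator of the index 1 with weight 1/4: the coefficients of t/4. *)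
Definition quarter_t (n : nat) : R := if (n =? 1)%nat then / 4 else 0.

Section RiccatiCoefficients.
Variable nu : R.
Hypothesis Hnu : -1 < nu.

(* [ric_table n] holds the first n+1 coefficients of the formal solution of
   t z' = t/4 - nu z + z^2 with z(0) = 0, i.e. of
   (n + nu) c_n = [n = 1]/4 + sum_{i=0}^n c_i c_{n-i}, c_0 = 0. *)
Fixpoint ric_table (n : nat) : nat -> R :=
  match n with
  | O => fun _ => 0
  | S m => fun k =>
      if (k <=? m)%nat then ric_table m k
      else if (k =? S m)%nat then
        (quarter_t (S m) + sum_f_R0 (fun i => ric_table m i * ric_table m (S m - i)) (S m))
        / (INR (S m) + nu)
      else 0
  end.

Definition ric (k : nat) : R := ric_table k k.

Lemma ric_table_beyond (n k : nat) : (n < k)%nat -> ric_table n k = 0.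
Proof.
  induction n; intro H; simpl; auto.
  destruct (Nat.leb_spec k n); [lia|]. destruct (Nat.eqb_spec k (S n)); [lia|auto].
Qed.

Lemma ric_table_stable (n k : nat) : (k <= n)%nat -> ric_table n k = ric k.
Proof.
  induction n; intro H.
  - assert (k = 0%nat) by lia. now subst.
  - destruct (Nat.eq_dec k (S n)); [now subst|].
    simpl. destruct (Nat.leb_spec k n); [apply IHn; auto | lia].
Qed.

Lemma ric_0 : ric 0 = 0.
Proof. reflexivity. Qed.

Lemma ric_rec (n : nat) : (INR n + nu) * ric n = quarter_t n + PS_mult ric ric n.
Proof.
  unfold PS_mult. destruct n.
  - simpl. rewrite ric_0. unfold quarter_t. simpl. ring.
  - assert (E : ric (S n) = (quarter_t (S n)
                  + sum_f_R0 (fun i => ric_table n i * ric_table n (S n - i)) (S n))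
                  / (INR (S n) + nu)).
    { unfold ric at 1. change (ric_table (S n) (S n)) with
        (if (S n <=? n)%nat then ric_table n (S n) else if (S n =? S n)%nat then
         (quarter_t (S n) + sum_f_R0 (fun i => ric_table n i * ric_table n (S n - i)) (S n))
         / (INR (S n) + nu) else 0).
      rewrite (proj2 (Nat.leb_gt (S n) n)), Nat.eqb_refl by lia. reflexivity. }
    rewrite E. assert (0 < INR (S n) + nu) by (rewrite S_INR; pose proof (pos_INR n); lra).
    rewrite (sum_eq _ (fun k => ric k * ric (S n - k))); [field; lra|].
    intros i Hi. destruct (Nat.eq_dec i 0) as [->|].
    + rewrite Nat.sub_0_r, (ric_table_beyond n (S n)), ric_0 by lia. ring.
    + destruct (Nat.eq_dec i (S n)) as [->|].
      * rewrite Nat.sub_diag, (ric_table_stable n 0), ric_0 by lia. ring.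
      * rewrite !ric_table_stable by lia. reflexivity.
Qed.

Lemma ric_nonneg (n : nat) : 0 <= ric n.
Proof.
  induction n as [n IH] using (well_founded_induction lt_wf).
  destruct n; [rewrite ric_0; lra|].
  assert (0 < INR (S n) + nu) by (rewrite S_INR; pose proof (pos_INR n); lra).
  assert (H1 : 0 <= quarter_t (S n) + PS_mult ric ric (S n)).
  { apply Rplus_le_le_0_compat; [unfold quarter_t; destruct (S n =? 1)%nat; lra|].
    unfold PS_mult. apply cond_pos_sum. intro i.
    destruct (Nat.eq_dec i 0) as [->|]; [rewrite ric_0; lra|].
    destruct (le_lt_dec i (S n)).
    - destruct (Nat.eq_dec i (S n)) as [->|]; [rewrite Nat.sub_diag, ric_0; lra|].
      apply Rmult_le_pos; apply IH; lia.
    - replace (S n - i)%nat with 0%nat by lia. rewrite ric_0. lra. }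
  rewrite <- ric_rec in H1. apply Rmult_le_reg_l with (INR (S n) + nu); lra.
Qed.

Lemma ric_1 : ric 1 = / (4 * (1 + nu)).
Proof.
  pose proof (ric_rec 1) as H. unfold PS_mult, quarter_t in H. simpl in H. rewrite ric_0 in H.
  apply Rmult_eq_reg_l with (1 + nu); [rewrite H; field|]; lra.
Qed.

Lemma ric_2_pos : 0 < ric 2.
Proof.
  pose proof (ric_rec 2) as H. unfold PS_mult, quarter_t in H. simpl in H.
  rewrite ric_0, ric_1 in H.
  assert (0 < / (4 * (1 + nu))) by (apply Rinv_0_lt_compat; lra).
  apply Rmult_lt_reg_l with (1 + 1 + nu); [lra|]. rewrite H. nra.
Qed.

End RiccatiCoefficients.

Lemma PSeries_nonneg (a : nat -> R) (x : R) :
  (forall n, 0 <= a n) -> 0 <= x -> ex_pseries a x -> 0 <= PSeries a x.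
Proof.
  intros Ha Hx He. rewrite <- (PSeries_const_0 x). unfold PSeries.
  apply Series_le; [|now apply ex_pseries_R]. intro n. rewrite Rmult_0_l. split; [lra|].
  apply Rmult_le_pos; [apply Ha | now apply pow_le].
Qed.

Lemma PSeries_nonpos (a : nat -> R) (x : R) :
  (forall n, a n <= 0) -> 0 <= x -> ex_pseries a x -> PSeries a x <= 0.
Proof.
  intros Ha Hx He.
  assert (H : 0 <= PSeries (PS_scal (-1) a) x).
  { apply PSeries_nonneg; auto; [|apply ex_pseries_scal; [apply Rmult_comm | auto]].
    intro n. unfold PS_scal, scal; simpl. unfold mult; simpl. specialize (Ha n). lra. }
  rewrite PSeries_scal in H. change (0 <= -1 * PSeries a x) in H. lra.
Qed.

Lemma CV_radius_of_bound (a : nat -> R) (r M : R) :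
  (forall n, Rabs (a n * r ^ n) <= M) -> Rbar_le r (CV_radius a).
Proof. intro H. apply (proj1 (CV_radius_bounded a)). now exists M. Qed.

Lemma sum_f_R0_term_le (g : nat -> R) (n N : nat) :
  (forall k, 0 <= g k) -> (n <= N)%nat -> g n <= sum_f_R0 g N.
Proof.
  intros Hg Hn. induction N.
  - replace n with 0%nat by lia. simpl. lra.
  - simpl. pose proof (Hg (S N)). destruct (Nat.eq_dec n (S N)) as [->|].
    + pose proof (cond_pos_sum g N Hg). lra.
    + assert (g n <= sum_f_R0 g N) by (apply IHN; lia). lra.
Qed.

Section FiniteSupport.
Variables (a : nat -> R) (N : nat).
Hypothesis Ha : forall k, (N < k)%nat -> a k = 0.

Lemma finite_support_inside (x : R) : Rbar_lt (Rabs x) (CV_radius a).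
Proof.
  assert (H : Rbar_le (Rabs x + 1) (CV_radius a)).
  { apply CV_radius_of_bound with (sum_f_R0 (fun k => Rabs (a k * (Rabs x + 1) ^ k)) N).
    intro n. destruct (le_lt_dec n N).
    - apply (sum_f_R0_term_le (fun k => Rabs (a k * (Rabs x + 1) ^ k))); auto.
      intro; apply Rabs_pos.
    - rewrite Ha, Rmult_0_l, Rabs_R0 by auto. apply cond_pos_sum. intro; apply Rabs_pos. }
  destruct (CV_radius a) as [r| |]; simpl in *; auto; lra.
Qed.

Lemma PSeries_finite_support (x : R) : PSeries a x = sum_f_R0 (fun k => a k * x ^ k) N.
Proof.
  rewrite (PSeries_decr_n a N x) by apply CV_radius_inside, finite_support_inside.
  rewrite (PSeries_ext _ (fun _ => 0)), PSeries_const_0; [ring|].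
  intro n. unfold PS_decr_n. apply Ha. lia.
Qed.

End FiniteSupport.

Lemma is_derive_continuity_pt (g : R -> R) (x l : R) : is_derive g x l -> continuity_pt g x.
Proof. intro H. apply derivable_continuous_pt. exists l. now apply is_derive_Reals. Qed.

Lemma continuity_pt_locally_bounded (g : R -> R) (x : R) :
  continuity_pt g x ->
  exists del M, 0 < del /\ 0 < M /\ forall y, Rabs (y - x) < del -> Rabs (g y) <= M.
Proof.
  intro Hg. destruct (Hg 1 ltac:(lra)) as [del [Hdel Hd]].
  exists del, (Rabs (g x) + 1). split; [lra|]. split; [pose proof (Rabs_pos (g x)); lra|].
  intros y Hy. destruct (Req_dec y x) as [->|Hyx]; [lra|].
  assert (Rabs (g y - g x) < 1) by (apply Hd; repeat split; auto).
  pose proof (Rabs_triang_inv (g y) (g x)). lra.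
Qed.

Lemma Rpower_small (a eps m : R) :
  0 < a -> 0 < eps -> 0 < m -> exists u, 0 < u < m /\ Rpower u a < eps.
Proof.
  intros Ha He Hm. set (v := Rmin (ln m) (ln eps / a) - 1).
  exists (exp v). split; [split; [apply exp_pos|]|].
  - rewrite <- (exp_ln m) by auto. apply exp_increasing.
    pose proof (Rmin_l (ln m) (ln eps / a)). unfold v. lra.
  - unfold Rpower. rewrite ln_exp, <- (exp_ln eps) by auto. apply exp_increasing.
    assert (a * Rmin (ln m) (ln eps / a) <= ln eps).
    { replace (ln eps) with (a * (ln eps / a)) at 2 by (field; lra).
      apply Rmult_le_compat_l; [lra | apply Rmin_r]. }
    unfold v. nra.
Qed.

(* For a power series p with p(0) = 0 converging on
   [0, T), on which phi > 0, the sign of the Riccati defect of p controls the sign of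
   gap = p phi + t phi' = phi (p - z), where z = -t phi'/phi. *)
Section Comparison.
Variables tau T : R.
Hypothesis Htau : -1 < tau.
Hypothesis Hphi : forall t, 0 <= t < T -> 0 < phi tau t.
Variable e : nat -> R.
Hypothesis He0 : e 0%nat = 0.
Hypothesis Hrad : forall t, 0 <= t < T -> Rbar_lt (Rabs t) (CV_radius e).

Definition ps (t : R) : R := PSeries e t.
Definition ps1 (t : R) : R := PSeries (PS_derive e) t.
(* p(t) / t and an antiderivative of it. *)
Definition ps_quot (t : R) : R := PSeries (PS_decr_1 e) t.
Definition ps_log (t : R) : R := PSeries (PS_Int (PS_decr_1 e)) t.

(* Defect of p in the Riccati equation t z' = t/4 - tau z + z^2. *)
Definition defect (t : R) : R := t * ps1 t - t / 4 + tau * ps t - ps t ^ 2.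
Definition gap (t : R) : R := ps t * phi tau t + t * phi1 tau t.
(* gap times the integrating factor t^tau exp(-ps_log), and its derivative. *)
Definition weighted_gap (t : R) : R := Rpower t tau * exp (- ps_log t) * gap t.
Definition weighted_gap_deriv (t : R) : R :=
  Rpower t tau / t * exp (- ps_log t) * phi tau t * defect t.

Lemma ps_quot_inside (t : R) : 0 <= t < T -> Rbar_lt (Rabs t) (CV_radius (PS_decr_1 e)).
Proof. intro Ht. rewrite CV_radius_decr_1. auto. Qed.

Lemma ps_log_inside (t : R) :
  0 <= t < T -> Rbar_lt (Rabs t) (CV_radius (PS_Int (PS_decr_1 e))).
Proof. intro Ht. rewrite CV_radius_Int. now apply ps_quot_inside. Qed.

Lemma ps_derive (t : R) : 0 <= t < T -> is_derive ps t (ps1 t).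
Proof. intro Ht. now apply is_derive_PSeries, Hrad. Qed.

Lemma ps_log_derive (t : R) : 0 <= t < T -> is_derive ps_log t (ps_quot t).
Proof.
  intro Ht. unfold ps_quot.
  replace (PSeries (PS_decr_1 e) t) with (PSeries (PS_derive (PS_Int (PS_decr_1 e))) t).
  - now apply is_derive_PSeries, ps_log_inside.
  - apply PSeries_ext. intro n. unfold PS_derive, PS_Int. field.
    rewrite S_INR. pose proof (pos_INR n). lra.
Qed.

Lemma ps_factor (t : R) : ps t = t * ps_quot t.
Proof. now apply PSeries_decr_1_aux. Qed.

Lemma weighted_gap_derive (t : R) :
  0 < t < T -> is_derive weighted_gap t (weighted_gap_deriv t).
Proof.
  intro Ht.
  assert (H1 : is_derive (fun x => Rpower x tau) t (tau * Rpower t (tau - 1)))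
    by (apply is_derive_Reals, derivable_pt_lim_power; lra).
  assert (H2 : is_derive (fun x => exp (- ps_log x)) t (- ps_quot t * exp (- ps_log t))).
  { apply (is_derive_comp exp (fun x => - ps_log x)); [apply is_derive_exp|].
    apply (is_derive_opp ps_log t (ps_quot t)), ps_log_derive. lra. }
  assert (H3 : is_derive gap t (ps1 t * phi tau t + ps t * phi1 tau t
                                + (1 * phi1 tau t + t * phi2 tau t))).
  { apply is_derive_Reals, (derivable_pt_lim_plus (fun t => ps t * phi tau t)).
    - apply derivable_pt_lim_mult; apply is_derive_Reals; [apply ps_derive; lra | now apply phi_derive].
    - apply (derivable_pt_lim_mult (fun t => t)); [apply derivable_pt_lim_id|].
      now apply is_derive_Reals, phi1_derive. }
  assert (H := Derive.is_derive_mult _ _ t _ _ (Derive.is_derive_mult _ _ t _ _ H1 H2) H3).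
  simpl in H. unfold weighted_gap. eapply is_derive_ext; [intro x; reflexivity|].
  replace (weighted_gap_deriv t) with
    ((tau * Rpower t (tau - 1) * exp (- ps_log t)
      + Rpower t tau * (- ps_quot t * exp (- ps_log t))) * gap t
     + Rpower t tau * exp (- ps_log t) * (ps1 t * phi tau t + ps t * phi1 tau t
                                          + (1 * phi1 tau t + t * phi2 tau t))); [exact H|].
  assert (E1 : Rpower t (tau - 1) = Rpower t tau / t).
  { unfold Rminus. rewrite Rpower_plus, Rpower_Ropp, Rpower_1 by lra. reflexivity. }
  assert (E2 : t * phi2 tau t = - (tau + 1) * phi1 tau t - phi tau t / 4)
    by (pose proof (phi_ode tau Htau t); lra).
  assert (E3 : ps_quot t = ps t / t) by (rewrite ps_factor; field; lra).
  rewrite E1, E2, E3. unfold weighted_gap_deriv, defect, gap. field. lra.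
Qed.

Lemma weighted_gap_monotone (s : R) :
  (forall t, 0 < t < T -> s * defect t <= 0) ->
  forall u v, 0 < u -> u < v -> v < T -> s * weighted_gap v <= s * weighted_gap u.
Proof.
  intros Hs u v Hu Huv HvT.
  destruct (MVT_gen weighted_gap u v weighted_gap_deriv) as [xi [Hxi Heq]].
  - intros x Hx. rewrite Rmin_left, Rmax_right in Hx by lra. apply weighted_gap_derive; lra.
  - intros x Hx. rewrite Rmin_left, Rmax_right in Hx by lra.
    apply is_derive_continuity_pt with (weighted_gap_deriv x), weighted_gap_derive; lra.
  - rewrite Rmin_left, Rmax_right in Hxi by lra.
    assert (Hw : 0 < Rpower xi tau / xi * exp (- ps_log xi) * phi tau xi).
    { repeat apply Rmult_lt_0_compat; try apply exp_pos; [apply Rinv_0_lt_compat | apply Hphi]; lra. }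
    assert (s * weighted_gap_deriv xi <= 0).
    { unfold weighted_gap_deriv. specialize (Hs xi ltac:(lra)). nra. }
    assert (s * weighted_gap v - s * weighted_gap u = s * weighted_gap_deriv xi * (v - u))
      by (rewrite <- Rmult_minus_distr_l, Heq; ring).
    nra.
Qed.

(* weighted_gap(u) = u^(tau+1) * (a function continuous at 0) tends to 0 at 0+. *)
Lemma weighted_gap_near_0 (eta t0 : R) :
  0 < eta -> 0 < t0 -> t0 < T -> exists u, 0 < u < t0 /\ Rabs (weighted_gap u) < eta.
Proof.
  intros Heta Ht0 HT.
  set (H x := exp (- ps_log x) * (ps_quot x * phi tau x + phi1 tau x)).
  assert (HQ : forall u, 0 < u -> weighted_gap u = Rpower u (tau + 1) * H u).
  { intros u Hu. unfold weighted_gap, gap, H. rewrite ps_factor, Rpower_plus, Rpower_1 by lra.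
    ring. }
  assert (Hcont : continuity_pt H 0).
  { apply continuity_pt_mult.
    - apply (continuity_pt_comp (fun x => - ps_log x) exp); [|apply derivable_continuous_pt, derivable_pt_exp].
      apply continuity_pt_opp, PSeries_continuity, ps_log_inside. lra.
    - apply continuity_pt_plus; [apply continuity_pt_mult|].
      + apply PSeries_continuity, ps_quot_inside. lra.
      + now apply phi_continuous.
      + now apply PSeries_continuity, phi1_inside. }
  destruct (continuity_pt_locally_bounded H 0 Hcont) as [del [M [Hdel [HM HB]]]].
  destruct (Rpower_small (tau + 1) (eta / M) (Rmin del t0)) as [u [Hu Hpow]];
    try apply Rmin_case; try apply Rdiv_lt_0_compat; try lra.
  pose proof (Rmin_l del t0). pose proof (Rmin_r del t0).
  exists u. split; [lra|].
  rewrite HQ, Rabs_mult, (Rabs_pos_eq (Rpower _ _)) by (try apply Rlt_le, exp_pos; lra).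
  assert (HBu : Rabs (H u) <= M) by (apply HB; rewrite Rminus_0_r, Rabs_pos_eq; lra).
  assert (Hp : 0 < Rpower u (tau + 1)) by apply exp_pos.
  apply Rle_lt_trans with (Rpower u (tau + 1) * M); [apply Rmult_le_compat_l; lra|].
  apply Rmult_lt_reg_r with (/ M); [now apply Rinv_0_lt_compat|].
  rewrite Rmult_assoc, Rinv_r, Rmult_1_r by lra. exact Hpow.
Qed.

Lemma gap_sign (s : R) :
  (forall t, 0 < t < T -> s * defect t <= 0) -> forall t, 0 < t < T -> s * gap t <= 0.
Proof.
  intros Hs t0 Ht0. destruct (Rle_lt_dec (s * gap t0) 0) as [|Hpos]; auto. exfalso.
  set (eta := s * weighted_gap t0).
  assert (Heta : 0 < eta).
  { unfold eta, weighted_gap.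
    replace (s * (Rpower t0 tau * exp (- ps_log t0) * gap t0))
      with (Rpower t0 tau * exp (- ps_log t0) * (s * gap t0)) by ring.
    apply Rmult_lt_0_compat; [apply Rmult_lt_0_compat; apply exp_pos | exact Hpos]. }
  assert (Hs1 : 0 < Rabs s + 1) by (pose proof (Rabs_pos s); lra).
  destruct (weighted_gap_near_0 (eta / (Rabs s + 1)) t0) as [u [Hu HQu]];
    try apply Rdiv_lt_0_compat; try lra.
  pose proof (weighted_gap_monotone s Hs u t0 ltac:(lra) ltac:(lra) ltac:(lra)).
  assert (Hsmall : (Rabs s + 1) * Rabs (weighted_gap u) < eta).
  { apply Rmult_lt_compat_l with (r := Rabs s + 1) in HQu; auto.
    replace ((Rabs s + 1) * (eta / (Rabs s + 1))) with eta in HQu by (field; lra). exact HQu. }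
  pose proof (Rle_abs (s * weighted_gap u)) as Habs. rewrite Rabs_mult in Habs.
  pose proof (Rabs_pos (weighted_gap u)). unfold eta in *. nra.
Qed.

End Comparison.

Definition defect_coef (tau : R) (e : nat -> R) (n : nat) : R :=
  (INR n + tau) * e n - quarter_t n - PS_mult e e n.

Lemma quarter_t_support (k : nat) : (1 < k)%nat -> quarter_t k = 0.
Proof. intro Hk. unfold quarter_t. destruct (Nat.eqb_spec k 1); [lia | reflexivity]. Qed.

Lemma PSeries_quarter_t (x : R) : PSeries quarter_t x = x / 4.
Proof.
  rewrite (PSeries_finite_support quarter_t 1) by apply quarter_t_support.
  unfold quarter_t. simpl. field.
Qed.

Lemma defect_series (tau : R) (e : nat -> R) (t : R) :
  Rbar_lt (Rabs t) (CV_radius e) ->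
  defect tau e t = PSeries (defect_coef tau e) t /\ ex_pseries (defect_coef tau e) t.
Proof.
  intro Hr.
  set (a1 := PS_incr_1 (PS_derive e)).
  set (a3 := PS_scal tau e).
  set (a4 := PS_mult e e).
  assert (E1 : ex_pseries a1 t) by (apply ex_pseries_incr_1, ex_pseries_derive; auto).
  assert (E2 : ex_pseries quarter_t t)
    by (apply CV_radius_inside, (finite_support_inside quarter_t 1), quarter_t_support).
  assert (E3 : ex_pseries a3 t)
    by (apply ex_pseries_scal; [apply Rmult_comm | apply CV_radius_inside; auto]).
  assert (E4 : ex_pseries a4 t) by (apply ex_pseries_mult; auto).
  assert (E12 : ex_pseries (PS_minus a1 quarter_t) t) by (apply ex_pseries_minus; auto).
  assert (E123 : ex_pseries (PS_plus (PS_minus a1 quarter_t) a3) t)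
    by (apply ex_pseries_plus; auto).
  assert (Ext : forall n, defect_coef tau e n = PS_minus (PS_plus (PS_minus a1 quarter_t) a3) a4 n).
  { intro n. unfold defect_coef, PS_minus, PS_plus, PS_opp, a1, a3, a4, PS_scal, PS_incr_1, PS_derive.
    unfold plus, opp, scal, mult; simpl. unfold plus, opp, mult; simpl.
    destruct n; [unfold zero; simpl; ring|].
    change (match n with 0%nat => 1 | S _ => INR n + 1 end) with (INR (S n)). ring. }
  split.
  - rewrite (PSeries_ext _ _ _ Ext), PSeries_minus, PSeries_plus, PSeries_minus by auto.
    unfold a1, a3, a4. rewrite PSeries_incr_1, PSeries_scal, PSeries_quarter_t, PSeries_mult by auto.
    unfold defect, ps, ps1. ring.
  - eapply ex_pseries_ext; [intro n; symmetry; apply Ext|]. now apply ex_pseries_minus.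
Qed.

(* The function that the Riccati series is shown to represent: h_u(r) = 2 zfun(r^2). *)
Definition zfun (tau t : R) : R := - t * phi1 tau t / phi tau t.

Definition ric_trunc (tau : R) (N n : nat) : R := if (n <=? N)%nat then ric tau n else 0.

Section RiccatiSeries.
Variables tau T : R.
Hypothesis Htau : -1 < tau.
Hypothesis Hphi : forall t, 0 <= t < T -> 0 < phi tau t.

Lemma ric_trunc_support (N k : nat) : (N < k)%nat -> ric_trunc tau N k = 0.
Proof. intro Hk. unfold ric_trunc. destruct (Nat.leb_spec k N); [lia | reflexivity]. Qed.

Lemma ric_trunc_nonneg (N n : nat) : 0 <= ric_trunc tau N n.
Proof. unfold ric_trunc. destruct (n <=? N)%nat; [now apply ric_nonneg | lra]. Qed.

(* Truncations have nonpositive defect: the defect vanishes up to degree N, and beyond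
   it only the (nonnegative) Cauchy product contributes, with a minus sign. *)
Lemma ric_trunc_defect (N n : nat) : defect_coef tau (ric_trunc tau N) n <= 0.
Proof.
  unfold defect_coef. destruct (le_lt_dec n N).
  - assert (PS_mult (ric_trunc tau N) (ric_trunc tau N) n = PS_mult (ric tau) (ric tau) n).
    { unfold PS_mult. apply sum_eq. intros i Hi. unfold ric_trunc.
      rewrite (proj2 (Nat.leb_le i N)), (proj2 (Nat.leb_le (n - i) N)) by lia. reflexivity. }
    rewrite H. unfold ric_trunc at 1. rewrite (proj2 (Nat.leb_le n N)) by lia.
    rewrite ric_rec by auto. lra.
  - rewrite ric_trunc_support by auto.
    assert (0 <= PS_mult (ric_trunc tau N) (ric_trunc tau N) n).
    { apply cond_pos_sum. intro; apply Rmult_le_pos; apply ric_trunc_nonneg. }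
    assert (0 <= quarter_t n) by (unfold quarter_t; destruct (n =? 1)%nat; lra). lra.
Qed.

(* By comparison, every partial sum of the Riccati series is bounded by zfun. *)
Lemma ric_partial_sum_le (N : nat) (t : R) :
  0 < t < T -> sum_f_R0 (fun k => ric tau k * t ^ k) N <= zfun tau t.
Proof.
  intro Ht.
  assert (Hrad : forall x, Rbar_lt (Rabs x) (CV_radius (ric_trunc tau N)))
    by (apply finite_support_inside with N, ric_trunc_support).
  assert (Hgap : 1 * gap tau (ric_trunc tau N) t <= 0).
  { apply (gap_sign tau T Htau Hphi _ eq_refl (fun x _ => Hrad x)); auto.
    intros x Hx. destruct (defect_series tau (ric_trunc tau N) x (Hrad x)) as [-> Hex].
    rewrite Rmult_1_l. apply PSeries_nonpos; auto; [apply ric_trunc_defect | lra]. }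
  unfold gap, ps in Hgap.
  rewrite (PSeries_finite_support _ N) in Hgap by apply ric_trunc_support.
  rewrite (sum_eq _ (fun k => ric tau k * t ^ k)) in Hgap.
  - pose proof (Hphi t ltac:(lra)). unfold zfun.
    apply Rmult_le_reg_r with (phi tau t); auto.
    replace (- t * phi1 tau t / phi tau t * phi tau t) with (- t * phi1 tau t) by (field; lra).
    lra.
  - intros i Hi. unfold ric_trunc. now rewrite (proj2 (Nat.leb_le i N) Hi).
Qed.

(* Bounded partial sums with nonnegative terms: the series converges on [0, T). *)
Lemma ric_inside (t : R) : 0 <= t < T -> Rbar_lt (Rabs t) (CV_radius (ric tau)).
Proof.
  intro Ht. set (r := (t + T) / 2).
  assert (Hr : 0 < r < T) by (unfold r; lra).
  assert (Rbar_le r (CV_radius (ric tau))).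
  { apply CV_radius_of_bound with (zfun tau r). intro n.
    assert (Hterm : forall k, 0 <= ric tau k * r ^ k)
      by (intro k; apply Rmult_le_pos; [now apply ric_nonneg | apply pow_le; lra]).
    rewrite Rabs_pos_eq by apply Hterm.
    apply Rle_trans with (sum_f_R0 (fun k => ric tau k * r ^ k) n).
    - apply (sum_f_R0_term_le (fun k => ric tau k * r ^ k)); auto.
    - now apply ric_partial_sum_le. }
  rewrite Rabs_pos_eq by lra.
  destruct (CV_radius (ric tau)) as [R0| |]; simpl in *; auto. unfold r in *. lra.
Qed.

(* The full series has zero defect, so comparison in both directions gives equality. *)
Lemma ric_series_eq (t : R) : 0 < t < T -> PSeries (ric tau) t = zfun tau t.
Proof.
  intro Ht.
  assert (Hdefect : forall x, 0 < x < T -> defect tau (ric tau) x = 0).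
  { intros x Hx. destruct (defect_series tau (ric tau) x (ric_inside x ltac:(lra))) as [-> _].
    rewrite <- (PSeries_const_0 x). apply PSeries_ext. intro n. unfold defect_coef.
    rewrite ric_rec by auto. ring. }
  assert (Hsign : forall s, s * gap tau (ric tau) t <= 0).
  { intro s. apply (gap_sign tau T Htau Hphi _ (ric_0 tau) ric_inside s); auto.
    intros x Hx. rewrite Hdefect by auto. lra. }
  assert (Hgap : gap tau (ric tau) t = 0) by (pose proof (Hsign 1); pose proof (Hsign (-1)); lra).
  unfold gap, ps in Hgap. pose proof (Hphi t ltac:(lra)). unfold zfun.
  apply Rmult_eq_reg_r with (phi tau t); [|lra].
  replace (- t * phi1 tau t / phi tau t * phi tau t) with (- t * phi1 tau t) by (field; lra).
  lra.
Qed.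

End RiccatiSeries.

Definition ric_sum (tau t : R) : R := PSeries (ric tau) t.
Definition ric_sum1 (tau t : R) : R := PSeries (PS_derive (ric tau)) t.
Definition ric_sum2 (tau t : R) : R := PSeries (PS_derive (PS_derive (ric tau))) t.

Section Convexity.
Variables tau T : R.
Hypothesis Htau : -1 < tau.
Hypothesis Hphi : forall t, 0 <= t < T -> 0 < phi tau t.

Lemma ric_derive_inside (t : R) :
  0 <= t < T -> Rbar_lt (Rabs t) (CV_radius (PS_derive (ric tau))).
Proof. intro Ht. rewrite CV_radius_derive. now apply (ric_inside tau T). Qed.

Lemma ric_derive2_inside (t : R) :
  0 <= t < T -> Rbar_lt (Rabs t) (CV_radius (PS_derive (PS_derive (ric tau)))).
Proof. intro Ht. rewrite !CV_radius_derive. now apply (ric_inside tau T). Qed.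

(* S'' has nonnegative coefficients and constant term 2 c_2 > 0. *)
Lemma ric_sum2_pos (t : R) : 0 <= t < T -> 0 < ric_sum2 tau t.
Proof.
  intro Ht. unfold ric_sum2.
  rewrite PSeries_decr_1 by now apply CV_radius_inside, ric_derive2_inside.
  assert (0 <= PSeries (PS_decr_1 (PS_derive (PS_derive (ric tau)))) t).
  { apply PSeries_nonneg; [|lra|].
    - intro n. unfold PS_decr_1, PS_derive.
      repeat apply Rmult_le_pos; try apply pos_INR. now apply ric_nonneg.
    - apply CV_radius_inside. rewrite CV_radius_decr_1. now apply ric_derive2_inside. }
  replace (PS_derive (PS_derive (ric tau)) 0%nat) with (2 * ric tau 2)
    by (unfold PS_derive; simpl; ring).
  pose proof (ric_2_pos tau Htau). nra.
Qed.

Lemma ric_sum1_increasing (s t : R) :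
  0 <= s -> s < t -> t < T -> ric_sum1 tau s < ric_sum1 tau t.
Proof.
  intros Hs Hst HtT.
  destruct (MVT_gen (ric_sum1 tau) s t (ric_sum2 tau)) as [xi [Hxi Heq]].
  - intros x Hx. rewrite Rmin_left, Rmax_right in Hx by lra.
    apply is_derive_PSeries, ric_derive_inside. lra.
  - intros x Hx. rewrite Rmin_left, Rmax_right in Hx by lra.
    apply PSeries_continuity, ric_derive_inside. lra.
  - rewrite Rmin_left, Rmax_right in Hxi by lra.
    pose proof (ric_sum2_pos xi ltac:(lra)). nra.
Qed.

End Convexity.

Section DerivativeOfHu.
Variables tau j : R.
Hypothesis Htau : -1 < tau.
Hypothesis Hj : 0 < j.
Hypothesis Hfirst : forall r, 0 < r < j -> BesselJ tau r <> 0.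

Lemma h_u_ric_sum (r : R) : 0 < r < j -> h_u tau r = 2 * ric_sum tau (r ^ 2).
Proof.
  intro Hr. assert (Hr2 : 0 < r ^ 2 < j ^ 2) by (split; nra).
  pose proof (phi_pos tau j Htau Hj Hfirst (r ^ 2) ltac:(lra)).
  rewrite h_u_phi by (auto; lra). unfold ric_sum.
  rewrite (ric_series_eq tau (j ^ 2)) by (auto; apply phi_pos; auto).
  unfold zfun. field. lra.
Qed.

Lemma h_u_derive (r : R) : 0 < r < j -> is_derive (h_u tau) r (4 * r * ric_sum1 tau (r ^ 2)).
Proof.
  intro Hr. assert (Hr2 : 0 < r ^ 2 < j ^ 2) by (split; nra).
  assert (HS : is_derive (ric_sum tau) (r ^ 2) (ric_sum1 tau (r ^ 2))).
  { apply is_derive_PSeries, (ric_inside tau (j ^ 2)); auto; [|lra]. now apply phi_pos. }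
  assert (Hsq : is_derive (fun y : R => y ^ 2) r (2 * r)).
  { apply is_derive_Reals. replace (2 * r) with (INR 2 * r ^ Nat.pred 2) by (simpl; ring).
    apply derivable_pt_lim_pow. }
  assert (H : is_derive (fun y => 2 * ric_sum tau (y ^ 2)) r (4 * r * ric_sum1 tau (r ^ 2))).
  { apply is_derive_Reals.
    replace (4 * r * ric_sum1 tau (r ^ 2)) with (2 * (ric_sum1 tau (r ^ 2) * (2 * r))) by ring.
    apply (derivable_pt_lim_scal (fun y => ric_sum tau (y ^ 2))).
    apply (derivable_pt_lim_comp (fun y => y ^ 2)); now apply is_derive_Reals. }
  eapply is_derive_ext_loc; [|exact H].
  assert (Heps : 0 < Rmin r (j - r)) by (apply Rmin_case; lra).
  exists (mkposreal _ Heps). intros y Hy.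
  change (Rabs (y - r) < Rmin r (j - r)) in Hy.
  pose proof (Rmin_l r (j - r)). pose proof (Rmin_r r (j - r)).
  apply Rabs_def2 in Hy. symmetry. apply h_u_ric_sum. lra.
Qed.

End DerivativeOfHu.

Theorem propositionA2 (tau j : R) (Htau : -1 < tau)
  (Hj : 0 < j) (Hzero : BesselJ tau j = 0)
  (Hfirst : forall r, 0 < r < j -> BesselJ tau r <> 0) :
  (forall r, 0 < r < j -> exists l, derivable_pt_lim (h_u tau) r l) /\
  (forall d : R -> R,
     (forall r, 0 < r < j -> derivable_pt_lim (h_u tau) r (d r)) ->
     forall r s, 0 < r -> r < s -> s < j -> d r / r < d s / s).
Proof.
  assert (Hder : forall r, 0 < r < j ->
                   derivable_pt_lim (h_u tau) r (4 * r * ric_sum1 tau (r ^ 2)))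
    by (intros r Hr; now apply is_derive_Reals, (h_u_derive tau j)).
  split; [intros r Hr; eexists; now apply Hder|].
  intros d Hd r s Hr Hrs Hs.
  (* d is the derivative of h_u, so d(x)/x = 4 S'(x^2), and S' is increasing. *)
  assert (Hquot : forall x, 0 < x < j -> d x / x = 4 * ric_sum1 tau (x ^ 2)).
  { intros x Hx. rewrite (uniqueness_limite (h_u tau) x _ _ (Hd x Hx) (Hder x Hx)).
    field. lra. }
  rewrite !Hquot by lra.
  assert (ric_sum1 tau (r ^ 2) < ric_sum1 tau (s ^ 2)).
  { apply (ric_sum1_increasing tau (j ^ 2) Htau (phi_pos tau j Htau Hj Hfirst)); nra. }
  lra.
Qed.
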